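(* Let $\mathbb{F}=\mathbb{GF}(2^n)$, let $V$ be a set of variables, and let $\Sigma=\mathbb{F}\cup\{\oplus,\otimes,f_1,\dots,f_t\}$ be a signature with $\Sigma\cap V=\emptyset$. Fix a total order $\geq_s$ on $V\uplus\Sigma$, and let $\geq_l$ (factor order) and $\geq_p$ (monomial order) be as defined in the context. Then the monomial order $\geq_p$ is a total order on monomials, where two monomials whose factor sequences sorted in descending $\geq_l$-order coincide are regarded as the same monomial.
   Context: Terms: the set $T[\Sigma,V]$ is the smallest set containing $\mathbb{F}\cup V$ and closed under $\tau\oplus\tau'$, $\tau\otimes\tau'$ and $f_j(\tau)$ ($j\in[1,t]$); here $\oplus,\otimes$ are binary symbols (addition and multiplication of $\mathbb{F}$) and $f_1,\dots,f_t$ are unary symbols. $T_{\backslash\oplus}(\Sigma,V)$ denotes the terms not using $\oplus$. A factor is a term that is either in $\mathbb{F}\cup V$ or of the form $f_i(\tau')$ with $\tau'\in T_{\backslash\oplus}(\Sigma,V)$. A monomial is a product $\alpha_1\otimes\cdots\otimes\alpha_k$ ($k\ge1$) of nonzero factors. Factor order: $\alpha\geq_l\alpha'$ iff one of: (i) $\alpha,\alpha'\in\mathbb{F}\cup V$ and $\alpha\geq_s\alpha'$; (ii) $\alpha=f(\tau)$, $\alpha'=f'(\tau')$ and either $f\geq_s f'$, or $f=f'$ and $\tau\geq_p\tau'$; (iii) $\alpha=f(\tau)$ and $f\geq_s\alpha'$, or $\alpha'=f(\tau)$ and $\alpha\geq_s f$. For a monomial $m=\alpha_1\cdots\alpha_k$,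 ${\sf sort}_{\geq_l}(\alpha_1,\dots,\alpha_k)$ is the sequence of its factors sorted in descending $\geq_l$-order. Monomial order: $m\geq_p m'$ iff ${\sf sort}_{\geq_l}$ of the factors of $m$ is lexicographically $\geq$ that of $m'$ (with respect to $\geq_l$; a proper prefix is smaller). The definitions of $\geq_l$ and $\geq_p$ are mutually recursive on term structure. *)

From mathcomp Require Import all_boot all_algebra.
Set Implicit Arguments. Unset Strict Implicit. Unset Printing Implicit Defensive.

(* Symbols of V ⊎ Σ, with Σ = F ∪ {⊕, ⊗, f_1, ..., f_t}; f_j is SFun j, j : 'I_t
   (indices shifted to 0..t-1). V and Σ are disjoint by construction. *)
Inductive sym (F V : Type) (t : nat) : Type :=
  | SConst of F
  | SVar of V
  | SAdd
  | SMul
  | SFun of 'I_t.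
Arguments SAdd {F V t}. Arguments SMul {F V t}.

Inductive term (F V : Type) (t : nat) : Type :=
  | TConst of F
  | TVar of V
  | TAdd of term F V t & term F V t
  | TMul of term F V t & term F V t
  | TApp of 'I_t & term F V t.

Section TermDefs.
Context {F : finFieldType} {V : eqType} {t : nat}.
Notation term := (term F V t).
Notation sym := (sym F V t).

Fixpoint tsize (x : term) : nat :=
  match x with
  | TConst _ | TVar _ => 1
  | TAdd a b | TMul a b => (tsize a + tsize b).+1
  | TApp _ a => (tsize a).+1
  end.

Fixpoint noadd (x : term) : bool :=
  match x with
  | TConst _ | TVar _ => true
  | TAdd _ _ => false
  | TMul a b => noadd a && noadd b
  | TApp _ a => noadd a
  end.

Definition is_factor (x : term) : bool :=
  match x with
  | TConst _ | TVar _ => true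
  | TApp _ a => noadd a
  | _ => false
  end.

Definition is_nzfactor (x : term) : bool :=
  is_factor x && (match x with TConst c => c != 0%R | _ => true end).

Fixpoint factors (x : term) : seq term :=
  match x with
  | TMul a b => factors a ++ factors b
  | _ => [:: x]
  end.

Definition is_monomial (m : term) : bool := all is_nzfactor (factors m).

Fixpoint lexge (T : Type) (le : rel T) (s1 s2 : seq T) : bool :=
  match s1, s2 with
  | [::], [::] => true
  | _ :: _, [::] => true
  | [::], _ :: _ => false
  | x :: s, y :: s' =>
      (le x y && ~~ le y x) || [&& le x y, le y x & lexge le s s']
  end.

Variable ges : rel sym.

Definition leaf_sym (x : term) : option sym :=
  match x with
  | TConst c => Some (SConst V t c)
  | TVar v => Some (SVar F t v)
  | _ => None
  end.

(* The mutually recursive factor order ≥_l, computed with fuel k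
   (k larger than the nesting depth suffices). *)
Fixpoint ge_lf (k : nat) (a b : term) : bool :=
  match k with
  | 0 => false
  | k'.+1 =>
    match a, b with
    | TApp f u, TApp f' u' =>
        ((f != f') && ges (SFun F V f) (SFun F V f'))
        || ((f == f') &&
            lexge (ge_lf k') (sort (ge_lf k') (factors u))
                             (sort (ge_lf k') (factors u')))
    | TApp f _, _ =>
        if leaf_sym b is Some s then ges (SFun F V f) s else false
    | _, TApp f _ =>
        if leaf_sym a is Some s then ges s (SFun F V f) else false
    | _, _ =>
        match leaf_sym a, leaf_sym b with
        | Some s, Some s' => ges s s'
        | _, _ => false
        end
    end
  end.

Definition ge_l (a b : term) : bool := ge_lf (tsize a + tsize b) a b.

Definition sortf (m : term) : seq term := sort ge_l (factors m).

Definition ge_p (m m' : term) : bool := lexge ge_l (sortf m) (sortf m').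

(* Identification of monomials: sorted factor sequences coincide, where
   factors f(τ), f(τ') coincide when τ, τ' are (recursively) identified. *)
Fixpoint same_ff (k : nat) (a b : term) : bool :=
  match k with
  | 0 => false
  | k'.+1 =>
    match a, b with
    | TConst c, TConst c' => c == c'
    | TVar v, TVar v' => v == v'
    | TApp f u, TApp f' u' => (f == f') && all2 (same_ff k') (sortf u) (sortf u')
    | _, _ => false
    end
  end.

Definition same_f (a b : term) : bool := same_ff (tsize a + tsize b) a b.

Definition same_mono (m m' : term) : bool := all2 same_f (sortf m) (sortf m').

End TermDefs.

Definition total_order (T : Type) (le : rel T) : Prop :=
  [/\ forall x, le x x,
      forall x y, le x y -> le y x -> x = y,
      forall x y z, le x y -> le y z -> le x z
    & forall x y, le x y || le y x].

From Pilot Require Import Defs.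
From mathcomp Require Import all_boot all_algebra zify.
From Stdlib Require Import FunctionalExtensionality.
Set Implicit Arguments. Unset Strict Implicit. Unset Printing Implicit Defensive.

(* Clause (ii) makes >=_l the lexicographic combination of >=_s on the head
   symbol of a factor with >=_p on the arguments of two applications of the
   same function symbol, and >=_p is the lexicographic extension of >=_l to
   sorted factor lists.  Both constructions preserve reflexivity, totality,
   transitivity and antisymmetry (the latter up to the identification of
   monomials), so all four properties follow by induction on the size of
   factors.  The computable definition of >=_l runs on fuel; the induction
   needs first that it is fuel-independent and hence satisfies its recursive
   equation. *)

Section Lexicographic.
Variables (T : Type) (P : pred T).

Lemma eq_in_sort (r1 r2 : rel T) s :
  {in P &, r1 =2 r2} -> all P s -> sort r1 s = sort r2 s.
Proof.
move=> r12 /all_sigP[{}s ->]; rewrite !sort_map; congr (map _ (sort _ _)).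
apply: functional_extensionality => x; apply: functional_extensionality => y.
by rewrite /= r12 //; [case: x | case: y].
Qed.

Lemma eq_in_lexge (r1 r2 : rel T) s1 s2 :
  {in P &, r1 =2 r2} -> all P s1 -> all P s2 -> lexge r1 s1 s2 = lexge r2 s1 s2.
Proof.
move=> r12; elim: s1 s2 => [|x s1 IH] [|y s2] //= /andP[Px Ps1] /andP[Py Ps2].
by rewrite !r12 // IH.
Qed.

Variable r : rel T.

Lemma lexge_refl_in s : {in P, reflexive r} -> all P s -> lexge r s s.
Proof.
move=> rr; elim: s => //= x s IH /andP[Px Ps].
by rewrite rr // IH ?orbT.
Qed.

Lemma lexge_total_in s1 s2 :
  {in P &, total r} -> all P s1 -> all P s2 -> lexge r s1 s2 || lexge r s2 s1.
Proof.
move=> rt; elim: s1 s2 => [|x s1 IH] [|y s2] //= /andP[Px Ps1] /andP[Py Ps2].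
by have := rt x y Px Py; case: (r x y); case: (r y x) => //= _; apply: IH.
Qed.

Lemma lexge_trans_in s1 s2 s3 :
  {in P & &, transitive r} -> all P s1 -> all P s2 -> all P s3 ->
  lexge r s1 s2 -> lexge r s2 s3 -> lexge r s1 s3.
Proof.
move=> rt; elim: s1 s2 s3 => [|x s1 IH] [|y s2] [|z s3] //=.
move=> /andP[Px Ps1] /andP[Py Ps2] /andP[Pz Ps3].
have strict_l u v w : P u -> P v -> P w -> r u v -> ~~ r v u -> r v w -> ~~ r w u.
  by move=> Pu Pv Pw ruv /negP nrvu rvw; apply/negP => rwu; apply: nrvu (rt w v u _ _ _ _ _).
have strict_r u v w : P u -> P v -> P w -> r u v -> r v w -> ~~ r w v -> ~~ r w u.
  by move=> Pu Pv Pw ruv rvw /negP nrwv; apply/negP => rwu; apply: nrwv (rt u w v _ _ _ _ _).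
case/orP => [/andP[rxy nryx] | /and3P[rxy ryx l12]];
case/orP => [/andP[ryz nrzy] | /and3P[ryz rzy l23]];
  rewrite (rt y x z) //=.
- by rewrite (strict_l x y z).
- by rewrite (strict_l x y z).
- by rewrite (strict_r x y z).
- by rewrite (rt y z x) ?(IH s2 s3) ?orbT.
Qed.

Lemma lexge_antisym_in (e : rel T) s1 s2 :
  {in P &, forall x y, r x y -> r y x -> e x y} -> all P s1 -> all P s2 ->
  lexge r s1 s2 -> lexge r s2 s1 -> all2 e s1 s2.
Proof.
move=> re; elim: s1 s2 => [|x s1 IH] [|y s2] //= /andP[Px Ps1] /andP[Py Ps2].
case/orP => [/andP[rxy /negbTE nryx] | /and3P[rxy ryx l12]].
  by rewrite nryx.
case/orP => [/andP[_ /negbTE]|/and3P[_ _ l21]]; first by rewrite rxy.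
by rewrite re // IH.
Qed.

End Lexicographic.

Section FactorOrder.
Variables (F : finFieldType) (V : eqType) (t : nat) (ges : rel (sym F V t)).
Local Notation term := (term F V t).
Local Notation tsize := Defs.tsize.

Definition ge_l_step (r : rel term) (a b : term) : bool :=
  match a, b with
  | TApp f u, TApp f' u' =>
      ((f != f') && ges (SFun F V f) (SFun F V f'))
      || ((f == f') && lexge r (sort r (factors u)) (sort r (factors u')))
  | TApp f _, _ => if leaf_sym b is Some s then ges (SFun F V f) s else false
  | _, TApp f _ => if leaf_sym a is Some s then ges s (SFun F V f) else false
  | _, _ =>
      match leaf_sym a, leaf_sym b with
      | Some s, Some s' => ges s s'
      | _, _ => false
      end
  end.

Lemma ge_lfS k : ge_lf ges k.+1 =2 ge_l_step (ge_lf ges k).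
Proof. by []. Qed.

Definition small_factor (N : nat) : {pred term} :=
  [pred x | is_factor x && (tsize x <= N)].

Lemma tsize_gt0 (x : term) : 0 < tsize x.
Proof. by case: x. Qed.

Lemma small_factor0 x : x \in small_factor 0 = false.
Proof. by rewrite inE leqNgt tsize_gt0 andbF. Qed.

Lemma small_factor_factor N x : x \in small_factor N -> is_factor x.
Proof. by rewrite inE => /andP[]. Qed.

Lemma all_small_factors N (u : term) :
  noadd u -> tsize u <= N -> all (mem (small_factor N)) (factors u).
Proof.
elim: u N => [c|v|a IHa b IHb|a IHa b IHb|f a IHa] N //= Hu HN; rewrite ?inE /= ?Hu ?HN //.
case/andP: Hu => Ha Hb; rewrite all_cat IHa ?IHb //; lia.
Qed.

Lemma all_factor_sortf (m : term) : is_monomial m -> all is_factor (sortf ges m).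
Proof. by move=> Hm; rewrite all_sort; apply: sub_all Hm => x /andP[]. Qed.

Lemma all_small_factors_app N f (u : term) :
  TApp f u \in small_factor N.+1 -> all (mem (small_factor N)) (factors u).
Proof. by rewrite inE => /andP[Hu HN]; apply: all_small_factors. Qed.

Lemma eq_in_ge_l_step N (r1 r2 : rel term) a b :
  a \in small_factor N.+1 -> b \in small_factor N.+1 ->
  {in small_factor N &, r1 =2 r2} -> ge_l_step r1 a b = ge_l_step r2 a b.
Proof.
case: a => [c|v|x y|x y|f u]; case: b => [c'|v'|x' y'|x' y'|f' u'] //= Ha Hb r12.
have Su := all_small_factors_app Ha; have Su' := all_small_factors_app Hb.
by rewrite (eq_in_sort r12 Su) (eq_in_sort r12 Su') (eq_in_lexge r12) // all_sort.
Qed.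

Lemma ge_lf_stable k k' :
  k <= k' -> {in small_factor k &, ge_lf ges k =2 ge_lf ges k'}.
Proof.
elim: k k' => [|k IH] [|k'] // lekk' a b; first by rewrite small_factor0.
move=> Ha Hb; rewrite !ge_lfS (eq_in_ge_l_step (r2 := ge_lf ges k') Ha Hb) //.
by move=> x y Hx Hy; apply: IH.
Qed.

Lemma ge_l_fuel k : {in small_factor k &, ge_lf ges k =2 ge_l ges}.
Proof.
move=> a b Ha Hb; pose m := maxn (tsize a) (tsize b).
have [Fa Fb] := (small_factor_factor Ha, small_factor_factor Hb).
have [Ham Hbm] : a \in small_factor m /\ b \in small_factor m.
  by rewrite !inE Fa Fb leq_maxl leq_maxr.
move: Ha Hb; rewrite !inE Fa Fb /= => Sa Sb.
rewrite /ge_l -(ge_lf_stable (k' := k) _ Ham Hbm).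
  by rewrite (ge_lf_stable (k' := tsize a + tsize b) _ Ham Hbm) // /m; lia.
by rewrite /m; lia.
Qed.

Lemma ge_l_unfold a b :
  is_factor a -> is_factor b -> ge_l ges a b = ge_l_step (ge_l ges) a b.
Proof.
move=> Fa Fb; have Hs : 0 < tsize a + tsize b by rewrite addn_gt0 tsize_gt0.
pose K := (tsize a + tsize b).-1.
have [Ha Hb] : a \in small_factor K.+1 /\ b \in small_factor K.+1.
  by rewrite !inE Fa Fb /K prednK // leq_addr leq_addl.
rewrite {1}/ge_l -(prednK Hs) ge_lfS.
exact: (eq_in_ge_l_step Ha Hb (ge_l_fuel (k := K))).
Qed.

Definition head_sym (a : term) : sym F V t :=
  match a with
  | TConst c => SConst V t c
  | TVar v => SVar F t v
  | TAdd _ _ => SAdd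
  | TMul _ _ => SMul
  | TApp f _ => SFun F V f
  end.

Definition ge_args (a b : term) : bool :=
  if (a, b) is (TApp _ u, TApp _ u') then lexge (ge_l ges) (sortf ges u) (sortf ges u')
  else true.

Hypothesis ges_total_order : total_order ges.

Let ges_refl : reflexive ges. Proof. by case: ges_total_order. Qed.
Let ges_anti x y : ges x y -> ges y x -> x = y.
Proof. by case: ges_total_order => _ anti _ _; apply: anti. Qed.
Let ges_trans : transitive ges.
Proof. by move=> y x z; case: ges_total_order => _ _ tr _; apply: tr. Qed.
Let ges_total : total ges. Proof. by case: ges_total_order. Qed.

Lemma ge_lE a b : is_factor a -> is_factor b ->
  ge_l ges a b = ges (head_sym a) (head_sym b)
                 && (ges (head_sym b) (head_sym a) ==> ge_args a b).
Proof.
move=> Fa Fb; rewrite ge_l_unfold //.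
case: a Fa => [c|v|x y|x y|f u] // _; case: b Fb => [c'|v'|x' y'|x' y'|f' u'] // _;
  rewrite /= ?implybT ?andbT //.
case: (eqVneq f f') => [<-|neq]; first by rewrite ges_refl.
rewrite orbF; case g: (ges _ _) => //=; case g': (ges _ _) => //.
by case: (ges_anti g g') neq => ->; rewrite eqxx.
Qed.

Lemma all_small_sortf_app N f (u : term) :
  TApp f u \in small_factor N.+1 -> all (mem (small_factor N)) (sortf ges u).
Proof. by rewrite all_sort; apply: all_small_factors_app. Qed.

Lemma ge_l_refl_small N : {in small_factor N, reflexive (ge_l ges)}.
Proof.
elim: N => [|N IH] a; first by rewrite small_factor0.
move=> Ha; rewrite ge_lE ?(small_factor_factor Ha) // ges_refl /=.
by case: a Ha => // f u Ha; apply: lexge_refl_in IH (all_small_sortf_app Ha).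
Qed.

Lemma ge_l_total_small N : {in small_factor N &, total (ge_l ges)}.
Proof.
elim: N => [|N IH] a b; first by rewrite small_factor0.
move=> Ha Hb; rewrite !ge_lE ?(small_factor_factor Ha) ?(small_factor_factor Hb) //.
have := ges_total (head_sym a) (head_sym b).
case: (ges _ _); case: (ges _ _) => //= _.
case: a Ha => // f u Ha; case: b Hb => // f' u' Hb.
exact: lexge_total_in IH (all_small_sortf_app Ha) (all_small_sortf_app Hb).
Qed.

Lemma ge_l_trans_small N : {in small_factor N & &, transitive (ge_l ges)}.
Proof.
elim: N => [|N IH] b a c; first by rewrite small_factor0.
move=> Hb Ha Hc.
rewrite !ge_lE ?(small_factor_factor Ha) ?(small_factor_factor Hb)
  ?(small_factor_factor Hc) // => /andP[gab eab] /andP[gbc ebc].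
rewrite (ges_trans gab gbc) /=; apply/implyP => gca.
have hab := ges_anti gab (ges_trans gbc gca).
have hbc := ges_anti gbc (ges_trans gca gab).
rewrite -hab ges_refl /= in eab; rewrite -hbc ges_refl /= in ebc.
clear gab gbc gca; case: a Ha hab eab => // f u Ha; case: c Hc hbc ebc => // h w Hc.
case: b Hb => [c'|v'|x y|x y|g v] // Hb _ ebc _ eab.
exact: lexge_trans_in IH (all_small_sortf_app Ha) (all_small_sortf_app Hb)
  (all_small_sortf_app Hc) eab ebc.
Qed.

Lemma ge_l_same_small k :
  {in small_factor k &, forall a b, ge_l ges a b -> ge_l ges b a -> same_ff ges k a b}.
Proof.
elim: k => [|k IH] a b; first by rewrite small_factor0.
move=> Ha Hb; rewrite !ge_lE ?(small_factor_factor Ha) ?(small_factor_factor Hb) //.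
move=> /andP[gab eab] /andP[gba eba]; have hab := ges_anti gab gba.
rewrite gba /= in eab; rewrite gab /= in eba.
clear gab gba; case: a Ha hab eab eba => [c|v|x y|x y|f u];
  case: b Hb => [c'|v'|x' y'|x' y'|f' u'] // Hb Ha [->] eab eba /=; rewrite eqxx //.
exact: lexge_antisym_in IH (all_small_sortf_app Ha) (all_small_sortf_app Hb) eab eba.
Qed.

Lemma ge_l_refl : {in is_factor, reflexive (ge_l ges)}.
Proof. by move=> a Fa; apply: (ge_l_refl_small (N := tsize a)); rewrite inE leqnn andbT. Qed.

Lemma ge_l_total : {in is_factor &, total (ge_l ges)}.
Proof.
move=> a b Fa Fb.
by apply: (ge_l_total_small (N := tsize a + tsize b)); rewrite inE ?leq_addr ?leq_addl andbT.
Qed.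

Lemma ge_l_trans : {in is_factor & &, transitive (ge_l ges)}.
Proof.
move=> b a c Fb Fa Fc; pose N := tsize a + tsize b + tsize c.
by apply: (ge_l_trans_small (N := N)); rewrite inE /N; apply/andP; split=> //; lia.
Qed.

Lemma ge_l_same : {in is_factor &, forall a b, ge_l ges a b -> ge_l ges b a -> same_f ges a b}.
Proof.
by move=> a b Fa Fb; apply: ge_l_same_small; rewrite inE ?leq_addr ?leq_addl andbT.
Qed.

End FactorOrder.

Theorem proposition1 (F : finFieldType) (n : nat) (hF : #|F| = (2 ^ n)%N)
  (V : eqType) (t : nat) (ges : rel (sym F V t)) (hges : total_order ges) :
  [/\ (forall m : term F V t, is_monomial m -> ge_p ges m m),
      (forall m1 m2 m3 : term F V t, is_monomial m1 -> is_monomial m2 ->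
         is_monomial m3 -> ge_p ges m1 m2 -> ge_p ges m2 m3 -> ge_p ges m1 m3),
      (forall m1 m2 : term F V t, is_monomial m1 -> is_monomial m2 ->
         ge_p ges m1 m2 || ge_p ges m2 m1)
    & (forall m1 m2 : term F V t, is_monomial m1 -> is_monomial m2 ->
         ge_p ges m1 m2 -> ge_p ges m2 m1 -> same_mono ges m1 m2)].
Proof.
have sortf_factors := all_factor_sortf ges.
split.
- by move=> m Hm; apply: lexge_refl_in (ge_l_refl hges) (sortf_factors m Hm).
- move=> m1 m2 m3 H1 H2 H3.
  exact: lexge_trans_in (ge_l_trans hges) (sortf_factors _ H1) (sortf_factors _ H2)
    (sortf_factors _ H3).
- move=> m1 m2 H1 H2.
  exact: lexge_total_in (ge_l_total hges) (sortf_factors _ H1) (sortf_factors _ H2).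
- move=> m1 m2 H1 H2.
  exact: lexge_antisym_in (ge_l_same hges) (sortf_factors _ H1) (sortf_factors _ H2).
Qed.
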